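(* Consider the controlled system $\dot x = f(x)+g(x)u$, $y=h(x)$, with $x\in\mathbb{R}^{d_x}$, $u\in\mathbb{R}^{d_u}$, where $f,g,h$ are sufficiently many times differentiable, let $\mathcal{S}\subset\mathbb{R}^{d_x}$ be open and let $i\ge1$ be an integer. Let $x\in\mathcal{S}$ and suppose there exist $L>0$ and a neighborhood $N$ of $x$ such that $$|L_gL_f^{i-1}h(x_a)-L_gL_f^{i-1}h(x_b)|\le L\,|\mathbf{H}_i(x_a)-\mathbf{H}_i(x_b)|\qquad\forall (x_a,x_b)\in N^2.$$ Then for any nonzero $v\in\mathbb{R}^{d_x}$ and any $k\in\{1,\dots,d_u\}$, $$\frac{\partial\mathbf{H}_i}{\partial x}(x)\,v=0\ \Longrightarrow\ \frac{\partial L_{g_k}L_f^{i-1}h}{\partial x}(x)\,v=0.$$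
   Context: $L_f$ is the Lie derivative along $f$, $g_k$ is the $k$-th column of $g$, and $L_g\alpha=(L_{g_1}\alpha,\dots,L_{g_{d_u}}\alpha)$. $\mathbf{H}_i(x)=(h(x),L_fh(x),\dots,L_f^{i-1}h(x))$. *)

From HB Require Import structures.
From mathcomp Require Import all_boot all_order all_algebra.
From mathcomp Require Import all_classical all_reals all_analysis.
Set Implicit Arguments. Unset Strict Implicit. Unset Printing Implicit Defensive.
Import Order.TTheory GRing.Theory Num.Theory.
Import numFieldNormedType.Exports.
Local Open Scope ring_scope.
Local Open Scope classical_set_scope.

Section Lie.
Variables (R : realType) (dx dy du : nat).
Notation X := 'rV[R]_dx.

Definition lie (F : X -> X) (phi : X -> 'rV[R]_dy) : X -> 'rV[R]_dy :=
  fun x => ('d phi x : X -> 'rV[R]_dy) (F x).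

Definition lie_iter (f : X -> X) (h : X -> 'rV[R]_dy) (j : nat) :=
  iter j (lie f) h.

Definition gcol (g : X -> 'M[R]_(dx, du)) (k : 'I_du) : X -> X :=
  fun x => (col k (g x))^T.

Definition lie_g (g : X -> 'M[R]_(dx, du)) (phi : X -> 'rV[R]_dy)
  : X -> 'M[R]_(du, dy) :=
  fun x => \matrix_(k < du, l < dy) lie (gcol g k) phi x ord0 l.

Definition Hvec (f : X -> X) (h : X -> 'rV[R]_dy) (i : nat)
  : X -> 'M[R]_(i, dy) :=
  fun x => \matrix_(j < i, l < dy) lie_iter f h j x ord0 l.
End Lie.

From HB Require Import structures.
From mathcomp Require Import all_boot all_order all_algebra.
From mathcomp Require Import all_classical all_reals all_analysis.
Import Order.TTheory GRing.Theory Num.Theory.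
Import numFieldNormedType.Exports.
Local Open Scope ring_scope.
Local Open Scope classical_set_scope.

(** Along the ray [t |-> x + t v], dividing the Lipschitz bound at [x] by
    [|t|] compares the difference quotients of [L_{g_k} L_f^{i-1} h], a row of
    [L_g L_f^{i-1} h] and hence of smaller norm, with those of [H_i].  In the
    limit [|D_v L_{g_k} L_f^{i-1} h (x)| <= L |D_v H_i (x)| = 0]. *)

Lemma norm_derive_le {R : realFieldType} {V W1 W2 : normedModType R}
    {phi : V -> W1} {H : V -> W2} {x v : V} {L : R} :
  derivable phi x v -> derivable H x v ->
  (\forall y \near x, `|phi y - phi x| <= L * `|H y - H x|) ->
  `|'D_v phi x| <= L * `|'D_v H x|.
Proof.
move=> dphi dH phi_le_H.
have to_x : (fun t : R => t *: v + x) @ 0^' --> x.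
  apply: cvg_within_filter.
  have := cvgD (@scalel_continuous _ _ v 0) (cvg_cst x (F := nbhs (0 : R))).
  by rewrite scale0r add0r; apply.
apply: (ler_cvg_to (cvg_norm dphi)); first exact: cvgMl_tmp (cvg_norm dH).
near=> t; rewrite /= !normrZ mulrCA ler_wpM2l //.
by near: t; exact: to_x _ phi_le_H.
Unshelve. all: by end_near.
Qed.

Lemma differentiable_mx {R : numFieldType} {V : normedModType R} {m n : nat}
    (F : V -> 'M[R]_(m, n)) (x : V) :
  (forall a l, differentiable (fun z => F z a l) x) -> differentiable F x.
Proof.
move=> dF.
have -> : F = \sum_(a < m) \sum_(l < n)
    (fun z => F z a l *: (delta_mx a l : 'M[R]_(m, n))).
  apply/funext => z; rewrite [LHS]matrix_sum_delta fct_sumE.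
  by apply: eq_bigr => a _; rewrite fct_sumE.
apply: differentiable_sum => a; apply: differentiable_sum => l.
exact: differentiableZl.
Qed.

Lemma differentiable_Hvec {R : realType} {dx dy : nat} (i : nat)
    (f : 'rV[R]_dx -> 'rV[R]_dx) (h : 'rV[R]_dx -> 'rV[R]_dy) (x : 'rV[R]_dx) :
  (forall j, (j < i)%N -> differentiable (lie_iter f h j) x) ->
  differentiable (Hvec f h i) x.
Proof.
move=> dLfh; apply: differentiable_mx => a l.
under eq_fun do rewrite mxE.
exact: differentiable_comp (dLfh _ (ltn_ord a)) (differentiable_coord _ _ _).
Qed.

Lemma row_lie_g {R : realType} {dx du dy : nat} (g : 'rV[R]_dx -> 'M[R]_(dx, du))
    (phi : 'rV[R]_dx -> 'rV[R]_dy) (k : 'I_du) (x : 'rV[R]_dx) :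
  row k (lie_g g phi x) = lie (gcol g k) phi x.
Proof. by apply/rowP => l; rewrite !mxE. Qed.

Lemma norm_row_le {R : realDomainType} {m n : nat} (M : 'M[R]_(m, n)) (k : 'I_m) :
  `|row k M| <= `|M|.
Proof.
rewrite [leLHS]/Num.Def.normr /= mx_normrE.
apply: bigmax_le => // -[a l] _ /=.
rewrite [leRHS]/Num.Def.normr /= mx_normrE.
by apply: le_trans (le_bigmax _ _ (k, l)); rewrite /= mxE.
Qed.

Theorem lemma4 (R : realType) (dx du dy : nat)
  (f : 'rV[R]_dx -> 'rV[R]_dx) (g : 'rV[R]_dx -> 'M[R]_(dx, du))
  (h : 'rV[R]_dx -> 'rV[R]_dy) (S : set 'rV[R]_dx) (i : nat)
  (S_open : open S) (i_ge1 : (1 <= i)%N)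
  (* "sufficiently differentiable": the Lie derivatives involved are differentiable *)
  (dLfh : forall j : nat, (j < i)%N -> forall z, differentiable (lie_iter f h j) z)
  (dLgLfh : forall k : 'I_du, forall z,
      differentiable (lie (gcol g k) (lie_iter f h i.-1)) z)
  (x : 'rV[R]_dx) (xS : S x)
  (Hlip : exists (L : R) (N : set 'rV[R]_dx), 0 < L /\ N \in nbhs x /\
     forall xa xb, N xa -> N xb ->
       `| lie_g g (lie_iter f h i.-1) xa - lie_g g (lie_iter f h i.-1) xb |
         <= L * `| Hvec f h i xa - Hvec f h i xb |) :
  forall (v : 'rV[R]_dx) (k : 'I_du), v != 0 ->
    ('d (Hvec f h i) x : 'rV[R]_dx -> 'M[R]_(i, dy)) v = 0 ->
    ('d (lie (gcol g k) (lie_iter f h i.-1)) x : 'rV[R]_dx -> 'rV[R]_dy) v = 0.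
Proof.
move=> v k _ dH0.
case: Hlip => L [N [_ [/[!in_setE] Nx lipN]]].
set phi := lie (gcol g k) (lie_iter f h i.-1); set H := Hvec f h i.
have dH : differentiable H x by apply: differentiable_Hvec => j /dLfh.
have dphi : differentiable phi x := dLgLfh k x.
have phi_le_H : \forall y \near x, `|phi y - phi x| <= L * `|H y - H x|.
  near=> y; rewrite /phi -!row_lie_g -linearB /=.
  apply: le_trans (norm_row_le _ _) (lipN _ _ _ (nbhs_singleton Nx)).
  by near: y.
rewrite -deriveE // in dH0; rewrite -deriveE //; apply/eqP.
rewrite -normr_le0.
apply: le_trans (norm_derive_le (diff_derivable dphi) (diff_derivable dH) phi_le_H) _.
by rewrite dH0 normr0 mulr0.
Unshelve. all: by end_near.
Qed.
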